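(* For $\psi=\log$ one has $\frac12\le C_{\log}\le1$, and for $\psi=\sqrt{\cdot}$ one has $C_{\sqrt{\cdot}}=0$.
   Context: For $\psi\in C^1((0,\infty))$ and $x,y>0$, $\widetilde{\psi}(x,y):=[\psi'(x)+\psi'(y)](1-xy)+x[\psi(y)-\psi(1/x)]+y[\psi(x)-\psi(1/y)]$, and $C_\psi:=\inf\frac{\widetilde{\psi}(x,y)}{(\psi(x)+\psi(y)-2\psi(1))^2}$, the infimum taken over all $x,y>0$ with $\psi(x)+\psi(y)\neq2\psi(1)$. *)

From Stdlib Require Import Reals Lra.
Open Scope R_scope.

(* psi~(x,y) := [psi'(x)+psi'(y)](1-xy) + x[psi(y)-psi(1/x)] + y[psi(x)-psi(1/y)],
   where dpsi plays the role of psi'. *)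
Definition psi_tilde (psi dpsi : R -> R) (x y : R) : R :=
  (dpsi x + dpsi y) * (1 - x * y) + x * (psi y - psi (/ x)) + y * (psi x - psi (/ y)).

Definition C_set (psi dpsi : R -> R) (q : R) : Prop :=
  exists x y : R, 0 < x /\ 0 < y /\ psi x + psi y <> 2 * psi 1 /\
    q = psi_tilde psi dpsi x y / (psi x + psi y - 2 * psi 1) ^ 2.

Definition is_lower_bound (E : R -> Prop) (m : R) : Prop :=
  forall q, E q -> m <= q.

Definition is_glb (E : R -> Prop) (m : R) : Prop :=
  is_lower_bound E m /\ (forall b, is_lower_bound E b -> b <= m).

Definition C_psi_is (psi dpsi : R -> R) (c : R) : Prop :=
  (forall x, 0 < x -> derivable_pt_lim psi x (dpsi x)) /\ is_glb (C_set psi dpsi) c.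

From Stdlib Require Import Reals Lra Psatz.
From Coquelicot Require Import Coquelicot.
Open Scope R_scope.

(* For [psi = ln], [psi~(x,y) = (x+y) (1/(xy) - 1 + ln (xy))] depends on [xy]
   only through [a = sqrt (xy)], and [x + y >= 2a]; the bound [C_ln >= 1/2]
   then reduces to the one-variable inequality
   [(ln a)^2 <= 1/a - a + 2 a ln a], proved by locating the minimum at [a = 1].
   The point [x = y = 1/e] gives the quotient [(e^2 - 3) / (2e) <= 1] since
   [e <= 3].  For [psi = sqrt], [psi~ >= 0] and [psi~(4, 1/4) = 0]. *)

Lemma ln_le_sub_1 x : 0 < x -> ln x <= x - 1.
Proof.
intros Hx; pose proof (exp_ineq1_le (ln x)) as H.
rewrite exp_ln in H; lra.
Qed.

Lemma one_sub_inv_le_ln x : 0 < x -> 1 - / x <= ln x.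
Proof.
intros Hx; pose proof (ln_le_sub_1 (/ x) (Rinv_0_lt_compat x Hx)) as H.
rewrite ln_Rinv in H; lra.
Qed.

Lemma min_at_1_of_derive_sign (f f' : R -> R) :
  (forall c, 0 < c -> derivable_pt_lim f c (f' c)) ->
  (forall c, 0 < c -> 0 <= (c - 1) * f' c) ->
  forall a, 0 < a -> f 1 <= f a.
Proof.
intros Hder Hsign a Ha.
destruct (Rtotal_order a 1) as [Hlt | [-> | Hgt]].
- destruct (MVT_cor2 f f' a 1 Hlt) as [c [Hmvt Hc]];
    [intros; apply Hder; lra |].
  pose proof (Hsign c ltac:(lra)); nra.
- lra.
- destruct (MVT_cor2 f f' 1 a Hgt) as [c [Hmvt Hc]];
    [intros; apply Hder; lra |].
  pose proof (Hsign c ltac:(lra)); nra.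
Qed.

Lemma inv_add_2_ln_pos c : 0 < c -> 0 < 1 + / c + 2 * ln c.
Proof.
intros Hc.
set (b := sqrt c).
assert (Hb : 0 < b) by (apply sqrt_lt_R0; lra).
assert (Hbb : c = b * b) by (unfold b; rewrite sqrt_sqrt; lra).
(* [ln c = 2 ln b >= 2 (1 - 1/b)] turns the sum into [(1/b - 2)^2 + 1]. *)
pose proof (one_sub_inv_le_ln b Hb).
rewrite Hbb, ln_mult, Rinv_mult by lra.
pose proof (pow2_ge_0 (/ b - 2)); nra.
Qed.

Lemma ln_sq_le a : 0 < a -> ln a ^ 2 <= / a - a + 2 * a * ln a.
Proof.
intros Ha.
set (h := fun t => / t - t + 2 * t * ln t - ln t ^ 2).
enough (h 1 <= h a) by (unfold h in *; rewrite ln_1 in *; lra).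
apply (min_at_1_of_derive_sign h (fun t => (t - 1) / t * (1 + / t + 2 * ln t)));
  [| | exact Ha]; intros c Hc.
- apply is_derive_Reals; unfold h; auto_derive; [lra | field; lra].
- pose proof (inv_add_2_ln_pos c Hc).
  replace ((c - 1) * ((c - 1) / c * (1 + / c + 2 * ln c)))
    with ((c - 1) ^ 2 * / c * (1 + / c + 2 * ln c)) by (field; lra).
  pose proof (pow2_ge_0 (c - 1)); pose proof (Rinv_0_lt_compat c Hc).
  apply Rmult_le_pos; [apply Rmult_le_pos |]; lra.
Qed.

Lemma psi_tilde_ln x y : 0 < x -> 0 < y ->
  psi_tilde ln (fun t => / t) x y = (x + y) * (/ (x * y) - 1 + ln (x * y)).
Proof.
intros Hx Hy; unfold psi_tilde.
rewrite !ln_Rinv, ln_mult by lra.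
field; lra.
Qed.

Lemma ln_psi_tilde_ge x y : 0 < x -> 0 < y ->
  (ln x + ln y) ^ 2 / 2 <= psi_tilde ln (fun t => / t) x y.
Proof.
intros Hx Hy.
rewrite psi_tilde_ln, <- ln_mult by lra.
set (a := sqrt (x * y)).
assert (Ha : 0 < a) by (apply sqrt_lt_R0; nra).
assert (Haa : x * y = a * a) by (unfold a; rewrite sqrt_sqrt; nra).
assert (Hfactor : 0 <= / (x * y) - 1 + ln (x * y)).
{ pose proof (ln_le_sub_1 (/ (x * y)) ltac:(apply Rinv_0_lt_compat; nra)).
  rewrite ln_Rinv in * by nra; lra. }
assert (Hamgm : 2 * a <= x + y).
{ pose proof (pow2_ge_0 (x - y)); nra. }
rewrite Haa, ln_mult, Rinv_mult in * by lra.
pose proof (ln_sq_le a Ha).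
assert (Hlow : 2 * a * (/ a * / a - 1 + (ln a + ln a))
               = 2 * (/ a - a + 2 * a * ln a)) by (field; lra).
assert (2 * a * (/ a * / a - 1 + (ln a + ln a))
        <= (x + y) * (/ a * / a - 1 + (ln a + ln a)))
  by (apply Rmult_le_compat_r; lra).
lra.
Qed.

Lemma ln_quot_ge_half x y : 0 < x -> 0 < y -> ln x + ln y <> 2 * ln 1 ->
  1 / 2 <= psi_tilde ln (fun t => / t) x y / (ln x + ln y - 2 * ln 1) ^ 2.
Proof.
intros Hx Hy Hne; rewrite ln_1 in *.
pose proof (ln_psi_tilde_ge x y Hx Hy).
assert (Hden : 0 < (ln x + ln y - 2 * 0) ^ 2)
  by (apply pow2_gt_0; lra).
apply (Rle_div_r _ _ _ Hden); lra.
Qed.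

Lemma ln_quot_at_inv_e :
  psi_tilde ln (fun t => / t) (/ exp 1) (/ exp 1)
    / (ln (/ exp 1) + ln (/ exp 1) - 2 * ln 1) ^ 2 <= 1.
Proof.
pose proof (exp_pos 1); pose proof exp_le_3.
rewrite psi_tilde_ln by (apply Rinv_0_lt_compat; lra).
rewrite ln_mult, ln_Rinv, ln_exp, ln_1, Rinv_mult, Rinv_inv
  by (try apply Rinv_0_lt_compat; lra).
apply Rle_div_l; [nra |].
replace ((/ exp 1 + / exp 1) * (exp 1 * exp 1 - 1 + (- (1) + - (1))))
  with (2 * (exp 1 - 3 / exp 1)) by (field; lra).
assert (1 <= 3 / exp 1) by (apply Rle_div_r; lra).
nra.
Qed.

Lemma psi_tilde_sqrt x y : 0 < x -> 0 < y ->
  psi_tilde sqrt (fun t => / (2 * sqrt t)) x y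
  = (sqrt x + sqrt y) * (1 - sqrt (x * y)) ^ 2 / (2 * sqrt (x * y)).
Proof.
intros Hx Hy; unfold psi_tilde.
pose proof (sqrt_lt_R0 x Hx); pose proof (sqrt_lt_R0 y Hy).
rewrite !sqrt_inv, sqrt_mult by lra.
rewrite <- (sqrt_sqrt x) at 2 3 by lra.
rewrite <- (sqrt_sqrt y) at 2 4 by lra.
field; lra.
Qed.

Lemma psi_tilde_sqrt_nonneg x y : 0 < x -> 0 < y ->
  0 <= psi_tilde sqrt (fun t => / (2 * sqrt t)) x y.
Proof.
intros Hx Hy.
pose proof (sqrt_lt_R0 x Hx); pose proof (sqrt_lt_R0 y Hy).
pose proof (sqrt_lt_R0 (x * y) ltac:(nra)).
rewrite psi_tilde_sqrt by lra.
apply Rmult_le_pos; [apply Rmult_le_pos; [lra | apply pow2_ge_0] |].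
apply Rlt_le, Rinv_0_lt_compat; lra.
Qed.

Lemma psi_tilde_sqrt_4_inv_4 :
  psi_tilde sqrt (fun t => / (2 * sqrt t)) 4 (/ 4) = 0.
Proof.
rewrite psi_tilde_sqrt, Rinv_r, sqrt_1 by lra.
field; pose proof (sqrt_lt_R0 4); lra.
Qed.

Lemma glb_exists (E : R -> Prop) m q0 : E q0 -> is_lower_bound E m ->
  exists c, is_glb E c /\ m <= c <= q0.
Proof.
intros Hq0 Hm.
destruct (completeness (fun z => E (- z))) as [l [Hub Hl]].
- exists (- m); intros z Hz; apply Hm in Hz; lra.
- exists (- q0); rewrite Ropp_involutive; exact Hq0.
- assert (Hlb : is_lower_bound E (- l)).
  { intros q Eq.
    assert (- q <= l) by (apply Hub; rewrite Ropp_involutive; exact Eq); lra. }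
  assert (Hgreatest : forall b, is_lower_bound E b -> b <= - l).
  { intros b Hb.
    assert (l <= - b) by (apply Hl; intros z Hz; apply Hb in Hz; lra); lra. }
  exists (- l); split; [split; assumption |].
  split; [apply Hgreatest, Hm | apply Hlb, Hq0].
Qed.

Lemma is_glb_of_mem (E : R -> Prop) q : E q -> is_lower_bound E q -> is_glb E q.
Proof. intros Hq Hlb; split; [exact Hlb | intros b Hb; exact (Hb q Hq)]. Qed.

Theorem mainTheorem17 :
  (exists c : R, C_psi_is ln (fun x => / x) c /\ 1 / 2 <= c <= 1) /\
  C_psi_is sqrt (fun x => / (2 * sqrt x)) 0.
Proof.
pose proof (exp_pos 1) as He.
split.
- assert (Hmem : C_set ln (fun t => / t)
    (psi_tilde ln (fun t => / t) (/ exp 1) (/ exp 1)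
       / (ln (/ exp 1) + ln (/ exp 1) - 2 * ln 1) ^ 2)).
  { exists (/ exp 1), (/ exp 1).
    rewrite ln_Rinv, ln_exp, ln_1 by lra.
    repeat split; try (apply Rinv_0_lt_compat; lra); lra. }
  assert (Hlb : is_lower_bound (C_set ln (fun t => / t)) (1 / 2)).
  { intros q [x [y [Hx [Hy [Hne ->]]]]]; exact (ln_quot_ge_half x y Hx Hy Hne). }
  destruct (glb_exists _ _ _ Hmem Hlb) as [c [Hglb Hc]].
  exists c; pose proof ln_quot_at_inv_e.
  split; [split; [exact derivable_pt_lim_ln | exact Hglb] | lra].
- split; [exact derivable_pt_lim_sqrt |].
  apply is_glb_of_mem.
  + exists 4, (/ 4); repeat split; try lra.
    * rewrite sqrt_inv, sqrt_1.
      replace 4 with (2 * 2) by ring; rewrite sqrt_square by lra; lra.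
    * rewrite psi_tilde_sqrt_4_inv_4; unfold Rdiv; ring.
  + intros q [x [y [Hx [Hy [Hne ->]]]]].
    apply Rmult_le_pos; [exact (psi_tilde_sqrt_nonneg x y Hx Hy) |].
    apply Rlt_le, Rinv_0_lt_compat, pow2_gt_0; lra.
Qed.
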